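(* Let $\mu$ be a left fuzzy $\Gamma$-hyperideal of a fuzzy $\Gamma$-hypersemigroup $(M,\circ)$. Then (i) $\mu\circ\gamma\circ m$ is a left fuzzy $\Gamma$-hyperideal of $(M,\circ)$ for all $m\in M$, $\gamma\in\Gamma$; (ii) $\mu\circ\gamma\circ\chi_M$ is a left fuzzy $\Gamma$-hyperideal of $(M,\circ)$ for all $\gamma\in\Gamma$.
   Context: $M,\Gamma$ are nonempty sets; a fuzzy subset of $M$ is a map $M\to[0,1]$. A fuzzy $\Gamma$-hyperoperation assigns to each $(a,\gamma,b)\in M\times\Gamma\times M$ a fuzzy subset $a\circ\gamma\circ b$. For $a\in M$ and fuzzy $\mu$: $(a\circ\gamma\circ\mu)(r)=\bigvee_{t\in M}((a\circ\gamma\circ t)(r)\wedge\mu(t))$ if $\mu\ne0$, else $0$; $(\mu\circ\gamma\circ a)(r)=\bigvee_{t\in M}(\mu(t)\wedge(t\circ\gamma\circ a)(r))$ if $\mu\ne0$, else $0$. For fuzzy $\mu,\nu$: $(\mu\circ\gamma\circ\nu)(t)=\bigvee_{p,q\in M}(\mu(p)\wedge(p\circ\gamma\circ q)(t)\wedge\nu(q))$. $(M,\circ)$ is a fuzzy $\Gamma$-hypersemigroup if $(a\circ\alpha\circ b)\circ\beta\circ c=a\circ\alpha\circ(b\circ\beta\circ c)$ for all $a,b,c\in M$, $\alpha,\beta\in\Gamma$. $\chi_M$ is the constant function $1$ on $M$. For fuzzy sets, $\mu\subseteq\nu$ means $\mu(x)\le\nu(x)$ for all $x$. A fuzzy subset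 $\mu$ is a left fuzzy $\Gamma$-hyperideal if $a\circ\gamma\circ\mu\subseteq\mu$ for all $a\in M$, $\gamma\in\Gamma$. *)

(* membership degrees live in [0,1] of a realType R;
   \bigvee is the supremum [sup] of classical reals. *)
From HB Require Import structures.
From mathcomp Require Import all_boot all_order all_algebra.
From mathcomp Require Import boolp classical_sets reals.
Set Implicit Arguments. Unset Strict Implicit. Unset Printing Implicit Defensive.
Import Order.TTheory GRing.Theory Num.Theory.
Local Open Scope ring_scope.
Local Open Scope classical_set_scope.

Section FuzzyGamma.
Variables (R : realType) (M G : Type).

Definition is_fuzzy (mu : M -> R) : Prop := forall x, 0 <= mu x <= 1.

Definition fuzzy_hyperop (op : M -> G -> M -> M -> R) : Prop :=
  forall a g b, is_fuzzy (op a g b).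

Definition fzero (mu : M -> R) : Prop := forall x, mu x = 0.

Definition elt_fz (op : M -> G -> M -> M -> R) (a : M) (g : G) (mu : M -> R)
  : M -> R := fun r =>
  if `[< fzero mu >] then 0
  else sup [set Num.min (op a g t r) (mu t) | t in [set: M]].

Definition fz_elt (op : M -> G -> M -> M -> R) (mu : M -> R) (g : G) (a : M)
  : M -> R := fun r =>
  if `[< fzero mu >] then 0
  else sup [set Num.min (mu t) (op t g a r) | t in [set: M]].

Definition fz_fz (op : M -> G -> M -> M -> R) (mu : M -> R) (g : G) (nu : M -> R)
  : M -> R := fun t =>
  sup [set Num.min (Num.min (mu pq.1) (op pq.1 g pq.2 t)) (nu pq.2)
      | pq in [set: M * M]].

Definition fuzzy_hypersemigroup (op : M -> G -> M -> M -> R) : Prop :=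
  fuzzy_hyperop op /\
  forall (a b c : M) (al be : G),
    fz_elt op (op a al b) be c = elt_fz op a al (op b be c).

Definition chiM : M -> R := fun _ => 1.

Definition fsubset (mu nu : M -> R) : Prop := forall x, mu x <= nu x.

Definition left_fuzzy_hyperideal (op : M -> G -> M -> M -> R) (mu : M -> R)
  : Prop :=
  is_fuzzy mu /\ forall (a : M) (g : G), fsubset (elt_fz op a g mu) mu.

End FuzzyGamma.

(* Both parts reduce to one inequality: for all s, t,
     mu(s) /\ (a o g' o t)(r) /\ (s o g o m)(t) <= (mu o g o m)(r).
   Associativity bounds (a o g' o t)(r) /\ (s o g o m)(t) by
   ((a o g' o s) o g o m)(r) = \/_u ((a o g' o s)(u) /\ (u o g o m)(r)), and the
   ideal property gives mu(s) /\ (a o g' o s)(u) <= mu(u).  Part (ii) follows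
   because mu o g o m <= mu o g o chi_M for every m. *)
From HB Require Import structures.
From mathcomp Require Import all_boot all_order all_algebra.
From mathcomp Require Import boolp classical_sets reals.
Set Implicit Arguments. Unset Strict Implicit. Unset Printing Implicit Defensive.
Import Order.TTheory GRing.Theory Num.Theory.
Local Open Scope ring_scope.
Local Open Scope classical_set_scope.

Section SupBounds.
Variable R : realType.

Lemma le_sup_ub (E : set R) (b x : R) : ubound E b -> E x -> x <= sup E.
Proof. by move=> Eb; apply: ub_le_sup; exists b. Qed.

(* The hypothesis [0 <= x] covers the empty set, whose supremum is [0]. *)
Lemma ge0_ge_sup (E : set R) (x : R) : 0 <= x -> ubound E x -> sup E <= x.
Proof.
move=> x0 Ex; have [->|E_ne] := eqVneq E set0; first by rewrite sup0.
by apply: ge_sup => //; apply/set0P.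
Qed.

Lemma ge0_ge_min_sup (E : set R) (c x : R) : 0 <= x ->
  (forall y, E y -> Num.min c y <= x) -> Num.min c (sup E) <= x.
Proof.
move=> x0 Ecx; have [cx|xc] := leP c x; first by rewrite ge_min cx.
suff supx : sup E <= x by rewrite ge_min supx orbT.
apply: ge0_ge_sup => // y Ey; have := Ecx y Ey.
by rewrite ge_min leNgt xc.
Qed.

Lemma sup_in01 (E : set R) :
  (forall y, E y -> 0 <= y <= 1) -> 0 <= sup E <= 1.
Proof.
move=> E01; apply/andP; split; last first.
  by apply: ge0_ge_sup; rewrite ?ler01 // => y /E01 /andP[].
have [->|/set0P[y Ey]] := eqVneq E set0; first by rewrite sup0.
have /andP[y0 _] := E01 y Ey; apply: le_trans y0 (ub_le_sup _ Ey).
by exists 1 => z /E01 /andP[].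
Qed.

End SupBounds.
Arguments le_sup_ub {R E} b {x}.

Section FuzzyProducts.
Variables (R : realType) (M G : Type) (op : M -> G -> M -> M -> R).
Hypothesis op_fuzzy : fuzzy_hyperop op.

Let op_le1 a g b x : op a g b x <= 1.
Proof. by case/andP: (op_fuzzy a g b x). Qed.

Let op_ge0 a g b x : 0 <= op a g b x.
Proof. by case/andP: (op_fuzzy a g b x). Qed.

Lemma elt_fz_ge a g (nu : M -> R) t r :
  Num.min (op a g t r) (nu t) <= elt_fz op a g nu r.
Proof.
rewrite /elt_fz; case: ifPn => [/asboolP nu0|_]; first by rewrite nu0 ge_min lexx orbT.
apply: (le_sup_ub 1); last by exists t.
by move=> _ [x _ <-]; rewrite ge_min op_le1.
Qed.

Lemma fz_elt_ge (nu : M -> R) g a t r :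
  Num.min (nu t) (op t g a r) <= fz_elt op nu g a r.
Proof.
rewrite /fz_elt; case: ifPn => [/asboolP nu0|_]; first by rewrite nu0 ge_min lexx.
apply: (le_sup_ub 1); last by exists t.
by move=> _ [x _ <-]; rewrite ge_min op_le1 orbT.
Qed.

Lemma fz_fz_ge (nu : M -> R) g (nu' : M -> R) p q r :
  Num.min (Num.min (nu p) (op p g q r)) (nu' q) <= fz_fz op nu g nu' r.
Proof.
apply: (le_sup_ub 1); last by exists (p, q).
by move=> _ [x _ <-]; rewrite !ge_min op_le1 orbT.
Qed.

Lemma elt_fz_le a g (nu : M -> R) r b : 0 <= b ->
  (forall t, Num.min (op a g t r) (nu t) <= b) -> elt_fz op a g nu r <= b.
Proof.
move=> b0 nub; rewrite /elt_fz; case: ifPn => // _.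
by apply: ge0_ge_sup => // _ [t _ <-].
Qed.

Lemma fz_elt_le (nu : M -> R) g a r b : 0 <= b ->
  (forall t, Num.min (nu t) (op t g a r) <= b) -> fz_elt op nu g a r <= b.
Proof.
move=> b0 nub; rewrite /fz_elt; case: ifPn => // _.
by apply: ge0_ge_sup => // _ [t _ <-].
Qed.

Lemma ge_min_fz_elt c (nu : M -> R) g a r b : 0 <= b ->
  (forall t, Num.min c (Num.min (nu t) (op t g a r)) <= b) ->
  Num.min c (fz_elt op nu g a r) <= b.
Proof.
move=> b0 nub; rewrite /fz_elt; case: ifPn => _; first by rewrite ge_min b0 orbT.
by apply: ge0_ge_min_sup => // _ [t _ <-].
Qed.

Lemma ge_min_fz_fz c (nu : M -> R) g (nu' : M -> R) r b : 0 <= b ->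
  (forall p q, Num.min c (Num.min (Num.min (nu p) (op p g q r)) (nu' q)) <= b) ->
  Num.min c (fz_fz op nu g nu' r) <= b.
Proof. by move=> b0 nub; apply: ge0_ge_min_sup => // _ [[p q] _ <-]. Qed.

Lemma fuzzy_fz_elt (nu : M -> R) g a :
  is_fuzzy nu -> is_fuzzy (fz_elt op nu g a).
Proof.
move=> nu_fuzzy r; rewrite /fz_elt; case: ifP => _; first by rewrite lexx ler01.
apply: sup_in01 => _ [t _ <-].
have /andP[nu0 _] := nu_fuzzy t.
by rewrite le_min nu0 op_ge0 ge_min op_le1 orbT.
Qed.

Lemma fuzzy_fz_fz (nu : M -> R) g (nu' : M -> R) :
  is_fuzzy nu -> is_fuzzy nu' -> is_fuzzy (fz_fz op nu g nu').
Proof.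
move=> nu_fuzzy nu'_fuzzy r; apply: sup_in01 => _ [[p q] _ <-] /=.
have /andP[nu0 _] := nu_fuzzy p; have /andP[nu'0 _] := nu'_fuzzy q.
by rewrite !le_min nu0 op_ge0 nu'0 !ge_min op_le1 !orbT.
Qed.

Lemma fuzzy_chiM : is_fuzzy (@chiM R M).
Proof. by move=> x; rewrite /chiM ler01 lexx. Qed.

Lemma fz_elt_le_fz_fz_chiM (nu : M -> R) g q r : is_fuzzy nu ->
  fz_elt op nu g q r <= fz_fz op nu g (@chiM R M) r.
Proof.
move=> nu_fuzzy; apply: fz_elt_le => [|t].
  by have /andP[] := fuzzy_fz_fz g nu_fuzzy fuzzy_chiM r.
apply: le_trans (fz_fz_ge nu g (@chiM R M) t q r).
by rewrite le_min lexx /chiM ge_min op_le1 orbT.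
Qed.

End FuzzyProducts.

Section LeftHyperideals.
Variables (R : realType) (M G : Type) (op : M -> G -> M -> M -> R) (mu : M -> R).
Hypothesis op_semigroup : fuzzy_hypersemigroup op.
Hypothesis mu_ideal : left_fuzzy_hyperideal op mu.

Let op_fuzzy : fuzzy_hyperop op. Proof. by case: op_semigroup. Qed.

Lemma left_hyperideal_min_le a g s u : Num.min (op a g s u) (mu s) <= mu u.
Proof.
by case: mu_ideal => _ mu_sub; apply: le_trans (mu_sub a g u); apply: elt_fz_ge.
Qed.

Lemma hypersemigroup_min_le a g' p g q t r :
  Num.min (op a g' t r) (op p g q t) <= fz_elt op (op a g' p) g q r.
Proof. by case: op_semigroup => _ assoc; rewrite assoc (elt_fz_ge op_fuzzy). Qed.

Lemma left_hyperideal_absorb a g' m g s t r :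
  Num.min (mu s) (Num.min (op a g' t r) (op s g m t)) <= fz_elt op mu g m r.
Proof.
apply: le_trans (le_min2 (lexx (mu s)) (hypersemigroup_min_le a g' s g m t r)) _.
apply: ge_min_fz_elt => [|u].
  by have /andP[] := fuzzy_fz_elt op_fuzzy g m (proj1 mu_ideal) r.
apply: le_trans (fz_elt_ge op_fuzzy mu g m u r).
rewrite minA le_min2 // (minC (mu s)).
exact: left_hyperideal_min_le.
Qed.

Lemma left_hyperideal_fz_elt m g : left_fuzzy_hyperideal op (fz_elt op mu g m).
Proof.
have nu_fuzzy := fuzzy_fz_elt op_fuzzy g m (proj1 mu_ideal).
split=> // a g' r; apply: elt_fz_le => [|t]; first by case/andP: (nu_fuzzy r).
apply: ge_min_fz_elt => [|s]; first by case/andP: (nu_fuzzy r).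
by rewrite minCA; apply: left_hyperideal_absorb.
Qed.

Lemma left_hyperideal_fz_fz_chiM g :
  left_fuzzy_hyperideal op (fz_fz op mu g (@chiM R M)).
Proof.
have nu_fuzzy := fuzzy_fz_fz op_fuzzy g (proj1 mu_ideal) (@fuzzy_chiM R M).
split=> // a g' r; apply: elt_fz_le => [|t]; first by case/andP: (nu_fuzzy r).
apply: ge_min_fz_fz => [|p q]; first by case/andP: (nu_fuzzy r).
apply: le_trans (fz_elt_le_fz_fz_chiM op_fuzzy g q r (proj1 mu_ideal)).
apply: le_trans (left_hyperideal_absorb a g' q g p t r).
by rewrite !le_min !ge_min !lexx !orbT.
Qed.

End LeftHyperideals.

Theorem theorem4p7 (R : realType) (M G : Type) (m0 : M) (g0 : G)
  (op : M -> G -> M -> M -> R) (mu : M -> R) :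
  fuzzy_hypersemigroup op ->
  left_fuzzy_hyperideal op mu ->
  (forall (m : M) (g : G), left_fuzzy_hyperideal op (fz_elt op mu g m)) /\
  (forall g : G, left_fuzzy_hyperideal op (fz_fz op mu g (@chiM R M))).
Proof.
move=> op_semigroup mu_ideal; split.
- exact: left_hyperideal_fz_elt.
- exact: left_hyperideal_fz_fz_chiM.
Qed.
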